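(* Let $\tau_i$ be an HC task that switches to HC mode at time $t_i\le t$, and suppose $t-t_i<D_i-D_i^L$. Then no job of $\tau_i$ can generate a demand of $C_i^H$ time units in the interval $[0,t)$. Consequently, $\tau_i$ generates maximal demand during $[0,t)$ when its first job is released at time $0$ and all successive jobs are released as soon as possible (i.e. at times $kT_i$, $k=0,1,2,\dots$).
   Context: A mixed-criticality sporadic task is $\tau_i=(T_i,L_i,\{C_i^L,C_i^H\},D_i)$: jobs are released with minimum separation $T_i$, $L_i\in\{LC,HC\}$, $D_i\le T_i$ is the relative deadline, and $C_i^L<C_i^H$ for HC tasks. Each task has a tightened deadline $D_i^L\le D_i$. An HC task is in LC mode until the instant $t_i$ at which some job requests to execute for more than $C_i^L$; from then on it is in HC mode. While in LC mode, a job released at $r$ must receive $C_i^L$ time units by $r+D_i^L$; once the task is in HC mode, a job may require up to $C_i^H$ units in total, to be received by its actual deadline $r+D_i$ (in particular a job can require $C_i^H$ only if it has not completed its LC-mode obligation before $t_i$, i.e. $r+D_i^L\ge t_i$). The demand of a task during $[0,t)$ is the amount of execution that must be completed within $[0,t)$ in order to meet all of its deadlines that fall in $[0,t)$; execution with deadline after $t$ contributes no demand. ''Maximal demand'' is over all legal release sequences (minimum separation $T_i$) and all legal execution behaviours. *)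

From mathcomp Require Import all_boot.
Set Implicit Arguments. Unset Strict Implicit. Unset Printing Implicit Defensive.

(* A single HC task tau_i = (T, HC, {CL, CH}, D) with tightened deadline DL,
   switching to HC mode at time ti. *)

(* A job released at r may require C^H (i.e. is still concerned by HC mode)
   iff it has not completed its LC-mode obligation before ti: r + DL >= ti. *)
Definition hc_job (DL ti r : nat) : bool := ti <= r + DL.

Definition job_deadline (D DL ti r : nat) : nat :=
  if hc_job DL ti r then r + D else r + DL.

Definition legal_exec (CL CH DL ti r c : nat) : Prop :=
  c <= (if hc_job DL ti r then CH else CL).

Definition job_demand (D DL ti t r c : nat) : nat :=
  if job_deadline D DL ti r <= t then c else 0.

Definition legal_releases (T : nat) (rs : seq nat) : Prop :=
  sorted (fun a b => a + T <= b) rs.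

Definition legal_behaviour (CL CH DL ti : nat) (rs : seq nat) (c : nat -> nat)
  : Prop :=
  forall i, i < size rs -> legal_exec CL CH DL ti (nth 0 rs i) (c i).

Definition task_demand (D DL ti t : nat) (rs : seq nat) (c : nat -> nat) : nat :=
  \sum_(i < size rs) job_demand D DL ti t (nth 0 rs i) (c i).

Definition periodic_releases (T n : nat) : seq nat :=
  [seq k * T | k <- iota 0 n].

(** An HC job released at [r] has its deadline at [r + D >= ti - DL + D], which
    lies beyond [t] because [t - ti < D - DL]; hence only jobs still in LC mode
    ([r + DL < ti]) contribute to the demand in [[0, t)], each at most [C^L],
    and no job can contribute [C^H].  This bound is antitone in the release
    time, and the [i]-th job of a legal release sequence is released no
    earlier than [i T], so the demand is at most that of the synchronous
    periodic pattern in which every LC-mode job executes exactly [C^L]. *)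

From mathcomp Require Import all_boot.
From mathcomp Require Import zify.

Set Implicit Arguments.
Unset Strict Implicit.
Unset Printing Implicit Defensive.

Definition lc_demand (CL DL ti r : nat) : nat := if hc_job DL ti r then 0 else CL.

Lemma lc_demand_le (CL DL ti r : nat) : lc_demand CL DL ti r <= CL.
Proof. by rewrite /lc_demand; case: ifP. Qed.

Lemma lc_demand_antitone (CL DL ti r1 r2 : nat) :
  r1 <= r2 -> lc_demand CL DL ti r2 <= lc_demand CL DL ti r1.
Proof.
rewrite /lc_demand /hc_job => le_r1_r2.
case: (leqP ti (r1 + DL)) => [hc_r1 | _]; last by case: ifP.
by rewrite ifT //; lia.
Qed.

Lemma lc_demand_switched (CL DL ti r : nat) : ti <= r -> lc_demand CL DL ti r = 0.
Proof. by rewrite /lc_demand /hc_job => ?; rewrite ifT //; lia. Qed.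

Lemma legal_exec_lc_demand (CL CH DL ti r : nat) :
  CL <= CH -> legal_exec CL CH DL ti r (lc_demand CL DL ti r).
Proof. by rewrite /legal_exec /lc_demand; case: ifP. Qed.

Lemma legal_releases_nth_ge (T : nat) (rs : seq nat) (i : nat) :
  legal_releases T rs -> i < size rs -> i * T <= nth 0 rs i.
Proof.
rewrite /legal_releases sorted_pairwise; last by move=> b a c; lia.
move/(pairwiseP 0) => sep; elim: i => [|i IHi] // lt_i_rs.
have := sep i i.+1 (ltnW lt_i_rs) lt_i_rs (ltnSn i).
have := IHi (ltnW lt_i_rs); rewrite mulSn; lia.
Qed.

Lemma size_periodic_releases (T n : nat) : size (periodic_releases T n) = n.
Proof. by rewrite size_map size_iota. Qed.

Lemma nth_periodic_releases (T n k : nat) :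
  k < n -> nth 0 (periodic_releases T n) k = k * T.
Proof. by move=> lt_k_n; rewrite (nth_map 0) ?size_iota // nth_iota. Qed.

Lemma leq_sum_vanishing (f : nat -> nat) (m n : nat) :
  (forall i, n <= i -> f i = 0) ->
  \sum_(0 <= i < m) f i <= \sum_(0 <= i < n) f i.
Proof.
move=> f_vanish; case: (leqP m n) => [le_mn | lt_nm].
  by rewrite (big_cat_nat (leq0n m) le_mn) leq_addr.
rewrite (big_cat_nat (leq0n n) (ltnW lt_nm)) /= [X in _ + X]big_nat_cond.
rewrite [X in _ + X]big1 ?addn0 // => i /andP[/andP[le_ni _] _].
exact: f_vanish.
Qed.

Section DemandAfterSwitch.

Variables (CL CH D DL ti t : nat).
Hypotheses (le_DL_D : DL <= D) (le_ti_t : ti <= t) (short_window : t - ti < D - DL).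

Lemma hc_job_deadline_gt (r : nat) : hc_job DL ti r -> t < job_deadline D DL ti r.
Proof. by move=> hc; rewrite /job_deadline hc; move: hc; rewrite /hc_job; lia. Qed.

Lemma job_demand_le_lc_demand (r c : nat) :
  legal_exec CL CH DL ti r c -> job_demand D DL ti t r c <= lc_demand CL DL ti r.
Proof.
rewrite /legal_exec /job_demand /lc_demand.
case: ifP => [hc _ | _ le_c_CL]; last by case: ifP.
by rewrite ifN // -ltnNge hc_job_deadline_gt.
Qed.

Lemma job_demand_lc_demand (r : nat) :
  job_demand D DL ti t r (lc_demand CL DL ti r) = lc_demand CL DL ti r.
Proof.
rewrite /job_demand /job_deadline /lc_demand /hc_job.
case: (leqP ti (r + DL)) => [_ | lc_r]; first by case: ifP.
by rewrite ifT //; lia.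
Qed.

Lemma task_demand_le_sum_lc_demand (T : nat) (rs : seq nat) (c : nat -> nat) :
  legal_releases T rs -> legal_behaviour CL CH DL ti rs c ->
  task_demand D DL ti t rs c <= \sum_(i < size rs) lc_demand CL DL ti (i * T).
Proof.
move=> legal_rs legal_c; apply: leq_sum => i _.
apply: leq_trans (job_demand_le_lc_demand (legal_c i (ltn_ord i))) _.
exact/lc_demand_antitone/legal_releases_nth_ge.
Qed.

Lemma task_demand_periodic_lc_demand (T n : nat) :
  task_demand D DL ti t (periodic_releases T n) (fun k => lc_demand CL DL ti (k * T))
  = \sum_(i < n) lc_demand CL DL ti (i * T).
Proof.
rewrite /task_demand size_periodic_releases; apply: eq_bigr => i _.
by rewrite nth_periodic_releases // job_demand_lc_demand.
Qed.

End DemandAfterSwitch.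

Theorem lemma2 (T CL CH D DL ti t : nat) :
  DL <= D -> D <= T -> CL < CH ->
  ti <= t -> t - ti < D - DL ->
  (* no job can generate a demand of CH in [0,t) *)
  (forall r c, legal_exec CL CH DL ti r c -> job_demand D DL ti t r c <> CH) /\
  (* maximal demand is reached by the synchronous periodic release pattern *)
  (forall (rs : seq nat) (c : nat -> nat),
      legal_releases T rs -> legal_behaviour CL CH DL ti rs c ->
      forall n, t <= n * T ->
      exists c' : nat -> nat,
        legal_behaviour CL CH DL ti (periodic_releases T n) c' /\
        task_demand D DL ti t rs c <=
          task_demand D DL ti t (periodic_releases T n) c').
Proof.
move=> le_DL_D _ lt_CL_CH le_ti_t short_window; split.
  move=> r c /(job_demand_le_lc_demand le_DL_D le_ti_t short_window) le_demand.
  apply/eqP; rewrite ltn_eqF //.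
  exact: leq_ltn_trans le_demand (leq_ltn_trans (lc_demand_le _ _ _ _) lt_CL_CH).
move=> rs c legal_rs legal_c n le_t_nT.
exists (fun k => lc_demand CL DL ti (k * T)); split.
  move=> k; rewrite size_periodic_releases => lt_k_n.
  by rewrite nth_periodic_releases //; exact/legal_exec_lc_demand/ltnW.
rewrite task_demand_periodic_lc_demand //.
have := task_demand_le_sum_lc_demand le_DL_D le_ti_t short_window legal_rs legal_c.
move/leq_trans; apply.
rewrite -!(big_mkord xpredT (fun i => lc_demand CL DL ti (i * T))).
apply: leq_sum_vanishing => i le_ni; apply: lc_demand_switched.
by apply: leq_trans le_ti_t (leq_trans le_t_nT (leq_mul le_ni (leqnn T))).
Qed.
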